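(* There is a universal constant $C\ge1$ such that for every $k\ge1$ and every perfect square $n$, \[\sum_{\lambda\vdash k}\frac{k!}{\lambda_1!\cdots\lambda_r!}\cdot\frac{(n)_{r}}{|\mathrm{Aut}(\lambda)|}\cdot\left|\mathbb E_{x\in\mathcal S(\sqrt n)}\big[x_1^{\lambda_1}\cdots x_r^{\lambda_r}\big]\right|\ \le\ k^{Ck}\,n^{k/2},\] where for each partition $\lambda=(\lambda_1\ge\cdots\ge\lambda_r>0)$ of $k$, $r=r(\lambda)$ is its number of parts. Moreover, for $n\ge6$ one may take $C=2$.
   Context: $\mathcal S(\sqrt n)=\{x\in\{\pm1\}^n:\sum_i x_i=\sqrt n\}$ with $x$ uniform on it. $(n)_r=n(n-1)\cdots(n-r+1)$ is the falling factorial. For a partition $\lambda$ of $k$, $|\mathrm{Aut}(\lambda)|=\prod_{i\ge1}p_i(\lambda)!$ where $p_i(\lambda)$ is the number of parts of $\lambda$ equal to $i$. *)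

From HB Require Import structures.
From mathcomp Require Import all_boot all_order all_algebra.
From mathcomp Require Import reals exp.
Set Implicit Arguments. Unset Strict Implicit. Unset Printing Implicit Defensive.
Import Order.TTheory GRing.Theory Num.Theory.
Local Open Scope ring_scope.

Definition is_partition (k : nat) (l : seq nat) : bool :=
  [&& sorted geq l, all (fun a => 0 < a)%N l & sumn l == k].

Definition partition_candidates (k : nat) : seq (seq nat) :=
  flatten [seq [seq [seq nat_of_ord i | i <- tval t] | t : r.-tuple 'I_k.+1]
          | r <- iota 0 k.+1].

Definition partitions (k : nat) : seq (seq nat) :=
  undup [seq l <- partition_candidates k | is_partition k l].

(* |Aut(lambda)| = prod_{i >= 1} p_i(lambda)! ; parts are <= k. *)
Definition aut_card (k : nat) (l : seq nat) : nat :=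
  (\prod_(1 <= i < k.+1) (count_mem i l)`!)%N.

Definition multinom (R : realType) (k : nat) (l : seq nat) : R :=
  (k`!)%:R / (\prod_(a <- l) a`!)%:R.

(* {+-1}-valued vectors of length n, encoded by booleans: true ↦ +1, false ↦ -1. *)
Definition spin (R : realType) (b : bool) : R := if b then 1 else -1.

Definition slice (R : realType) (n : nat) (s : R) : {set {ffun 'I_n -> bool}} :=
  [set x : {ffun 'I_n -> bool} | \sum_(i < n) @spin R (x i) == s].

(* x_1^{l_1} ... x_r^{l_r}; coordinates beyond n are omitted (only relevant
   when r > n, in which case (n)_r = 0 kills the term). *)
Definition monomial (R : realType) (n : nat) (l : seq nat) (x : {ffun 'I_n -> bool}) : R :=
  \prod_(i < n) @spin R (x i) ^+ (nth 0%N l i).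

Definition slice_expect (R : realType) (n : nat) (s : R)
    (f : {ffun 'I_n -> bool} -> R) : R :=
  (\sum_(x in @slice R n s) f x) / (#|@slice R n s|)%:R.

Definition lhsB6 (R : realType) (k n : nat) : R :=
  \sum_(l <- partitions k)
    @multinom R k l * ((n ^_ (size l))%:R / (aut_card k l)%:R)
    * `| @slice_expect R n (Num.sqrt (n%:R)) (@monomial R n l) |.

From HB Require Import structures.
From mathcomp Require Import all_boot all_order all_algebra.
From mathcomp Require Import reals exp.
From mathcomp Require Import fingroup perm.
From mathcomp Require Import ring zify.
Import Order.TTheory GRing.Theory Num.Theory.
Set Implicit Arguments. Unset Strict Implicit. Unset Printing Implicit Defensive.

(* By symmetry, the moment E[prod_{i in I} x_i] on S(m) only depends on
   j = |I|; call it e_j.  Multiplying by sum_i x_i = m yields the recurrence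
   (n - j) e_{j+1} = m e_j - j e_{j-1}, from which (n)_j m^j |e_j| <= t_j n^j,
   t_j being the number of involutions of a j-element set.  As x_i^2 = 1, the
   moment of x^lambda equals e_j where j is the number of odd parts of lambda.
   If lambda has r parts, p of them equal to 1, then 2r <= k + j gives
   (n)_r |E[x^lambda]| <= t_j m^k, and factorial estimates bound the weight of
   lambda, so that each summand is at most k^(k-p+j) m^k <= k^(2k) m^k / 2^(k-1).
   Since there are at most 2^(k-1) partitions of k (they are compositions of k),
   the whole sum is at most k^(2k) n^(k/2): the constant C = 2 works for every
   perfect square n. *)

(* k! <= p! k^(k-p): the factors p+1, ..., k are each at most k. *)
Lemma fact_le_fact_mul_pow (p k : nat) : (p <= k)%N -> (k`! <= p`! * k ^ (k - p))%N.
Proof.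
move=> pk; suff growth d : ((p + d)`! <= p`! * (p + d) ^ d)%N.
  by have := growth (k - p)%N; rewrite subnKC.
elim: d => [|d IH]; first by rewrite addn0 expn0 muln1.
rewrite addnS factS expnS mulnCA leq_mul2l (leq_trans IH) ?orbT //.
by rewrite leq_mul2l; case: d {IH} => [|d]; rewrite ?expn0 ?leq_exp2r ?leqnSn ?orbT.
Qed.

Lemma fact_le_pow (j k : nat) : (j <= k)%N -> (j`! <= k ^ j)%N.
Proof.
elim: j => [|j IH] jk //; rewrite factS expnS leq_mul //.
exact/IH/ltnW.
Qed.

Lemma pow2_le_pow (k o : nat) : (0 < k)%N -> (3 * o <= k)%N -> (2 ^ k.-1 <= k ^ (k - o))%N.
Proof.
case: k => [|[|[|k]]] // _ ok; try by have -> : o = 0%N by lia.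
set K := k.+3; rewrite -(@leq_exp2r _ _ 3) // -!expnM.
apply: (@leq_trans (3 ^ (2 * K))).
  apply: (@leq_trans (2 ^ (3 * K))); first by apply: leq_pexp2l => //; lia.
  by rewrite !expnM leq_exp2r.
apply: (@leq_trans (K ^ (2 * K))); first by rewrite leq_exp2r.
by apply: leq_pexp2l => //; lia.
Qed.

Lemma ffactSr_le (n i : nat) : (n ^_ i.+1 <= n ^_ i * n)%N.
Proof. by rewrite ffactnSr leq_mul2l leq_subr orbT. Qed.

Lemma ffact_le_mul_pow (n j d : nat) : (n ^_ (j + d) <= n ^_ j * n ^ d)%N.
Proof.
elim: d => [|d IH]; first by rewrite addn0 muln1.
rewrite addnS expnS mulnCA mulnC (leq_trans (ffactSr_le _ _)) // leq_mul2r.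
by rewrite IH orbT.
Qed.

Fixpoint involutions (j : nat) : nat :=
  if j is (j'.+1 as i).+1 then (involutions i + i * involutions j')%N else 1%N.

Lemma involutionsS (j : nat) :
  involutions j.+1 = (involutions j + j * involutions j.-1)%N.
Proof. by case: j. Qed.

(* Involutions are among the j! permutations. *)
Lemma involutions_le_fact (j : nat) : (involutions j <= j`!)%N.
Proof.
elim/ltn_ind: j => -[|[|j]] IH //.
rewrite [involutions _]involutionsS [(j.+2)`!]factS [j.+2 * _]mulSn.
rewrite leq_add ?IH // leq_mul2l.
by rewrite (leq_trans (IH j _)) // factS leq_pmull.
Qed.

Lemma positive_parts_counts (l : seq nat) : all (fun a => 0 < a)%N l ->
  [/\ (2 * size l <= sumn l + count odd l)%N,
      (count_mem 1%N l + 3 * (count odd l - count_mem 1%N l) <= sumn l)%N,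
      (count_mem 1%N l <= count odd l)%N &
      (count odd l <= sumn l)%N ].
Proof.
elim: l => [|a l IH] //= /andP [a_gt0 /IH].
move: (count odd l) (count_mem 1%N l) (sumn l) (size l) => j p s r [IH1 IH2 IH3 IH4].
by case: a a_gt0 => [|[|[|a]]] //= _; rewrite ?eqxx /=; try (case: (odd a) => /=); split; lia.
Qed.

Lemma partition_weight_le (k p j : nat) : (0 < k)%N -> (p <= j)%N ->
  (p + 3 * (j - p) <= k)%N -> (2 ^ k.-1 * k ^ (k - p + j) <= k ^ (2 * k))%N.
Proof.
move=> k_gt0 pj counts.
have -> : (2 * k = (k - (j - p)) + (k - p + j))%N by lia.
by rewrite [X in (_ <= X)%N]expnD leq_mul2r pow2_le_pow ?orbT //; lia.
Qed.

(* compositions f k lists the compositions of k into at most f positive parts,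
   by choosing the first part a+1 and composing the rest k - (a+1). *)
Fixpoint compositions (f k : nat) : seq (seq nat) :=
  if k is 0 then [:: [::]] else
  if f is f'.+1 then
    flatten [seq [seq a.+1 :: c | c <- compositions f' (k - a.+1)] | a <- iota 0 k]
  else [::].

Lemma compositionsSS (f k : nat) : compositions f.+1 k.+1 =
  flatten [seq [seq a.+1 :: c | c <- compositions f (k - a)] | a <- iota 0 k.+1].
Proof. by []. Qed.

(* Every composition of k has at most k parts, hence appears in the list. *)
Lemma mem_compositions (f k : nat) (l : seq nat) : (k <= f)%N ->
  all (fun a => 0 < a)%N l -> sumn l = k -> l \in compositions f k.
Proof.
elim: f k l => [|f IH] k l.
  by rewrite leqn0 => /eqP -> {k}; case: l => [|a l] //= /andP [a_gt0 _]; lia.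
case: k => [|k] kf; first by case: l => [|a l] //= /andP [a_gt0 _]; lia.
rewrite compositionsSS; case: l => [|[|a] l] // /andP [_ l_pos] [sum_l].
apply/flatten_mapP; exists a; first by rewrite mem_iota; lia.
by apply: map_f; apply: IH => //; lia.
Qed.

Lemma sum_pow2_pred (k : nat) : (\sum_(0 <= i < k.+1) 2 ^ i.-1 = 2 ^ k)%N.
Proof.
elim: k => [|k IH]; first by rewrite big_nat1.
by rewrite big_nat_recr //= IH expnS mul2n -addnn.
Qed.

Lemma size_compositions (f k : nat) : (size (compositions f k) <= 2 ^ k.-1)%N.
Proof.
elim: f k => [|f IH] [|k] //.
rewrite compositionsSS size_flatten /shape -map_comp sumnE big_map.
apply: (@leq_trans (\sum_(a <- iota 0 k.+1) 2 ^ (k - a).-1)).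
  by apply: leq_sum => a _; rewrite /= size_map IH.
rewrite -[iota 0 k.+1]/(index_iota 0 k.+1) big_nat_rev /= -sum_pow2_pred.
by apply: eq_leq; apply: eq_big_nat => i /andP [_ ik]; congr (2 ^ _); lia.
Qed.

Lemma partitions_parts (k : nat) (l : seq nat) : l \in partitions k ->
  all (fun a => 0 < a)%N l /\ sumn l = k.
Proof.
rewrite /partitions mem_undup mem_filter => /andP [].
by rewrite /is_partition => /and3P [_ l_pos /eqP].
Qed.

(* Partitions of k are in particular compositions of k. *)
Lemma size_partitions (k : nat) : (size (partitions k) <= 2 ^ k.-1)%N.
Proof.
apply: leq_trans (size_compositions k k); apply: uniq_leq_size; first exact: undup_uniq.
by move=> l /partitions_parts [l_pos sum_l]; apply: mem_compositions; rewrite ?sum_l.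
Qed.

Lemma aut_card_ge (k : nat) (l : seq nat) : (0 < k)%N ->
  ((count_mem 1%N l)`! <= aut_card k l)%N.
Proof.
move=> k_gt0; rewrite /aut_card big_ltn //.
by apply: leq_pmulr; apply: prodn_gt0 => i; apply: fact_gt0.
Qed.

Lemma partition_weight_nat (k : nat) (l : seq nat) : (0 < k)%N ->
  all (fun a => 0 < a)%N l -> sumn l = k ->
  (k`! * involutions (count odd l) <=
   k ^ (k - count_mem 1%N l + count odd l) * ((\prod_(a <- l) a`!) * aut_card k l))%N.
Proof.
move=> k_gt0 l_pos sum_l; have [_ _ ones_odd odd_k] := positive_parts_counts l_pos.
rewrite sum_l in odd_k.
set p := count_mem 1%N l; set j := count odd l.
have fact_k := fact_le_fact_mul_pow (leq_trans ones_odd odd_k).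
have inv_j := leq_trans (involutions_le_fact j) (fact_le_pow odd_k).
apply: (leq_trans (leq_mul fact_k inv_j)).
rewrite expnD -mulnA mulnC leq_mul2l; apply/orP; right.
rewrite (leq_trans (aut_card_ge l k_gt0)) // leq_pmull //.
by rewrite prodn_gt0 // => a; apply: fact_gt0.
Qed.

Local Open Scope ring_scope.

Lemma involutions_growth (R : numDomainType) (N : R) (f : nat -> R) :
  0 <= N -> `|f 0%N| <= 1 ->
  (forall j, `|f j.+1| <= N * `|f j| + j%:R * N ^+ 2 * `|f j.-1|) ->
  forall j, `|f j| <= (involutions j)%:R * N ^+ j.
Proof.
move=> N0 f0 step.
suff both : forall j, `|f j| <= (involutions j)%:R * N ^+ j /\
              `|f j.+1| <= (involutions j.+1)%:R * N ^+ j.+1 by move=> j; case: (both j).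
elim=> [|j [IHj IHj1]].
  split; first by rewrite expr0 mulr1.
  apply: (le_trans (step 0%N)); rewrite mulr0n !mul0r addr0 mul1r expr1.
  by rewrite -[X in _ <= X]mulr1 ler_wpM2l.
split=> //; apply: (le_trans (step j.+1)).
rewrite [involutions _]involutionsS natrD natrM mulrDl /=.
apply: lerD.
  by rewrite [N ^+ j.+2]exprS mulrCA ler_wpM2l.
rewrite (_ : N ^+ j.+2 = N ^+ 2 * N ^+ j); last by rewrite -exprD.
by rewrite mulrACA ler_wpM2l ?mulr_ge0 ?exprn_ge0.
Qed.

Section ThreeTermRecurrence.
Variables (R : numDomainType) (M : R) (n : nat) (e : nat -> R).
Hypotheses (M_ge0 : 0 <= M) (M_sqr : M ^+ 2 = n%:R).
Hypothesis e0_le1 : `|e 0%N| <= 1.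
Hypothesis e_rec :
  forall j, (j < n)%N -> (n - j)%:R * e j.+1 = M * e j - j%:R * e j.-1.

Definition scaled_moment (j : nat) : R := (n ^_ j)%:R * M ^+ j * e j.

Lemma norm_scaled_moment (j : nat) :
  `|scaled_moment j| = (n ^_ j)%:R * M ^+ j * `|e j|.
Proof. by rewrite /scaled_moment !normrM normr_nat normrX ger0_norm. Qed.

Lemma scaled_moment_step (j : nat) :
  `|scaled_moment j.+1| <=
  n%:R * `|scaled_moment j| + j%:R * n%:R ^+ 2 * `|scaled_moment j.-1|.
Proof.
have rhs_ge0 : 0 <= n%:R * `|scaled_moment j| + j%:R * n%:R ^+ 2 * `|scaled_moment j.-1|.
  by rewrite addr_ge0 ?mulr_ge0 ?exprn_ge0.
have [jn|nj] := ltnP j n; last first.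
  by rewrite /scaled_moment ffact_small ?ltnS // mul0r mul0r normr0.
(* Multiply the recurrence by (n)_j M^(j+1). *)
have -> : scaled_moment j.+1 =
    n%:R * scaled_moment j - j%:R * ((n ^_ j)%:R * M ^+ j.+1 * e j.-1).
  rewrite /scaled_moment ffactnSr natrM.
  rewrite (_ : _ * _ * e j.+1 = (n ^_ j)%:R * M ^+ j.+1 * ((n - j)%:R * e j.+1)).
    by rewrite e_rec // -M_sqr !exprS; ring.
  by ring.
apply: (le_trans (ler_normB _ _)); apply: lerD; first by rewrite normrM normr_nat.
rewrite normrM normr_nat -[X in _ <= X]mulrA.
case: j jn {rhs_ge0} => [|i] _; first by rewrite mulr0n !mul0r.
rewrite ler_wpM2l // norm_scaled_moment /= 2!normrM normr_nat normrX ger0_norm //.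
have -> : n%:R ^+ 2 * ((n ^_ i)%:R * M ^+ i * `|e i|) =
          (n ^_ i * n)%:R * M ^+ i.+2 * `|e i|.
  by rewrite natrM -[i.+2]addn2 exprD M_sqr; ring.
by rewrite ler_wpM2r // ler_wpM2r ?exprn_ge0 // ler_nat ffactSr_le.
Qed.

Lemma three_term_recurrence_bound (j : nat) :
  (n ^_ j)%:R * M ^+ j * `|e j| <= (involutions j)%:R * n%:R ^+ j.
Proof.
rewrite -norm_scaled_moment; apply: involutions_growth => //.
  by rewrite norm_scaled_moment ffactn0 expr0 !mul1r.
exact: scaled_moment_step.
Qed.

End ThreeTermRecurrence.

Lemma tperm_imset (T : finType) (a b : T) (I : {set T}) :
  a \in I -> b \notin I -> tperm a b @: I = b |: (I :\ a).
Proof.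
move=> aI bI; apply/setP => x; apply/imsetP/idP; rewrite !inE.
- case=> y yI ->{x}; case: tpermP => [_|yb|/eqP ya /eqP yb].
  + by rewrite eqxx.
  + by move: bI; rewrite -yb yI.
  + by rewrite yI ya orbT.
- move=> xI; exists (tperm a b x); last by rewrite tpermK.
  case: tpermP => // [xa|/eqP xa /eqP xb].
  + by move: xI; rewrite xa eqxx /= orbF => /eqP ab; move: bI; rewrite -ab aI.
  + by move: xI; rewrite (negbTE xb) xa.
Qed.

Section SliceMoments.
Variables (R : realType) (n : nat) (s : R).

Definition slice_moment (I : {set 'I_n}) : R :=
  slice_expect s (fun x => \prod_(i in I) spin R (x i)).

Lemma spin_sqr (b : bool) : spin R b * spin R b = 1.
Proof. by case: b; rewrite /spin ?mulr1 ?mulrNN ?mulr1. Qed.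

(* S(s) is invariant under permutation of coordinates, hence so are moments. *)
Lemma slice_moment_perm (I : {set 'I_n}) (sg : {perm 'I_n}) :
  slice_moment (sg @: I) = slice_moment I.
Proof.
rewrite /slice_moment /slice_expect; congr (_ / _).
pose permute (x : {ffun 'I_n -> bool}) := [ffun i => x (sg i)].
have permute_inj : injective permute.
  move=> x y /ffunP eq_xy; apply/ffunP => i.
  by have := eq_xy (sg^-1 i)%g; rewrite !ffunE permKV.
have permute_slice x : (permute x \in slice n s) = (x \in slice n s).
  rewrite !inE [X in _ == s = (X == s)](reindex_inj (@perm_inj _ sg)) /=.
  by under eq_bigr do rewrite ffunE.
rewrite [RHS](reindex_inj permute_inj) /=.
under [RHS]eq_bigl do rewrite permute_slice.
apply: eq_bigr => x _; rewrite big_imset /=; last by move=> i j _ _; apply: perm_inj.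
by apply: eq_bigr => i _; rewrite ffunE.
Qed.

(* A moment only depends on the number of coordinates involved: two sets of
   equal size are exchanged by a product of transpositions. *)
Lemma slice_moment_card (I J : {set 'I_n}) :
  #|I| = #|J| -> slice_moment I = slice_moment J.
Proof.
move: {2}#|I :\: J| (erefl #|I :\: J|) => d; elim: d I => [|d IH] I dIJ cardIJ.
  have subIJ : I \subset J by rewrite -setD_eq0 -cards_eq0 dIJ.
  by have /eqP -> : I == J by rewrite eqEcard subIJ cardIJ leqnn.
have [a aIJ] : exists a, a \in I :\: J by apply/set0Pn; rewrite -card_gt0 dIJ.
have dJI : #|J :\: I| = d.+1.
  have := cardsID J I; have := cardsID I J.
  by rewrite setIC cardIJ dIJ => <- /eqP; rewrite eqn_add2l => /eqP.
have [b bJI] : exists b, b \in J :\: I by apply/set0Pn; rewrite -card_gt0 dJI.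
move: aIJ bJI; rewrite !inE => /andP [aJ aI] /andP [bI bJ].
rewrite -(slice_moment_perm I (tperm a b)) tperm_imset //; apply: IH.
  suff -> : (b |: I :\ a) :\: J = (I :\: J) :\ a.
    by move: dIJ; rewrite (cardsD1 a (I :\: J)) !inE aI aJ add1n => [[]].
  apply/setP => x; rewrite !inE.
  by have [->|xb] := eqVneq x b; rewrite ?bJ ?andbF //= andbCA.
by rewrite cardsU1 !inE negb_and bI orbT /= -cardIJ (cardsD1 a I) aI.
Qed.

(* Multiplying by sum_i x_i = s shifts moments up and down by one coordinate. *)
Lemma slice_moment_shift (I : {set 'I_n}) :
  s * slice_moment I =
  \sum_(i in I) slice_moment (I :\ i) + \sum_(i in ~: I) slice_moment (i |: I).
Proof.
rewrite /slice_moment /slice_expect -!mulr_suml -mulrDl mulrA; congr (_ / _).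
rewrite mulr_sumr.
transitivity (\sum_(x in slice n s) \sum_(i < n)
     (spin R (x i) * \prod_(j in I) spin R (x j))).
  by apply: eq_bigr => x; rewrite inE => /eqP <-; rewrite mulr_suml.
rewrite exchange_big /= (bigID (fun i => i \in I)) /=; congr (_ + _).
  apply: eq_bigr => i iI; apply: eq_bigr => x _.
  by rewrite (big_setD1 i iI) /= mulrA spin_sqr mul1r.
apply: eq_big => [i|i iI]; first by rewrite inE.
by apply: eq_bigr => x _; rewrite big_setU1.
Qed.

(* The j-th moment: the common value of the moments of sets of size j. *)
Definition slice_moment_seq (j : nat) : R := slice_moment [set i : 'I_n | (i < j)%N].

Lemma card_prefix (j : nat) : (j <= n)%N -> #|[set i : 'I_n | (i < j)%N]| = j.
Proof.
move=> jn; have -> : [set i : 'I_n | (i < j)%N] = widen_ord jn @: [set: 'I_j].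
  apply/setP => i; rewrite !inE; apply/idP/imsetP => [ij|[i' _ ->]].
  - by exists (Ordinal ij) => //; apply: val_inj.
  - exact: (ltn_ord i').
rewrite card_imset ?cardsT ?card_ord // => a b /(f_equal val) eq_ab.
by apply: val_inj.
Qed.

Lemma slice_momentE (I : {set 'I_n}) : slice_moment I = slice_moment_seq #|I|.
Proof.
have := max_card I; rewrite card_ord => In.
by apply: slice_moment_card; rewrite card_prefix.
Qed.

Lemma slice_moment_rec (j : nat) : (j < n)%N ->
  (n - j)%:R * slice_moment_seq j.+1 =
  s * slice_moment_seq j - j%:R * slice_moment_seq j.-1.
Proof.
move=> jn; set K := [set i : 'I_n | (i < j)%N].
have cardK : #|K| = j by rewrite card_prefix // ltnW.
have sum_down : \sum_(i in K) slice_moment (K :\ i) = j%:R * slice_moment_seq j.-1.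
  rewrite (eq_bigr (fun _ => slice_moment_seq j.-1)) ?sumr_const ?cardK ?mulr_natl //.
  by move=> i iK; rewrite slice_momentE; move: cardK; rewrite (cardsD1 i K) iK => <-.
have sum_up : \sum_(i in ~: K) slice_moment (i |: K) = (n - j)%:R * slice_moment_seq j.+1.
  rewrite (eq_bigr (fun _ => slice_moment_seq j.+1)); last first.
    by move=> i; rewrite inE => iK; rewrite slice_momentE cardsU1 iK cardK.
  by rewrite sumr_const cardsCs setCK card_ord cardK mulr_natl.
have := slice_moment_shift K; rewrite sum_down sum_up (slice_momentE K) cardK => ->.
by rewrite addrAC subrr add0r.
Qed.

(* The empty moment is 1 (or 0 on an empty slice). *)
Lemma slice_moment_seq0 : `|slice_moment_seq 0| <= 1.
Proof.
rewrite /slice_moment_seq (_ : [set i : 'I_n | (i < 0)%N] = set0); last first.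
  by apply/setP => i; rewrite !inE.
rewrite /slice_moment /slice_expect (eq_bigr (fun _ => 1)); last first.
  by move=> x _; rewrite big_set0.
rewrite sumr_const; case: #|slice n s| => [|c]; first by rewrite mul0r normr0.
by rewrite -mulr_natl mulr1 mulfV ?normr1 ?pnatr_eq0.
Qed.

End SliceMoments.

Lemma card_odd_exponents (n : nat) (l : seq nat) : (size l <= n)%N ->
  #|[set i : 'I_n | odd (nth 0%N l i)]| = count odd l.
Proof.
move=> size_l.
have -> : #|[set i : 'I_n | odd (nth 0%N l i)]| =
          count (fun i => odd (nth 0%N l i)) (iota 0 n).
  rewrite -val_enum_ord count_map cardE /enum_mem size_filter count_filter.
  by apply: eq_count => i; rewrite !inE /= andbT.
rewrite -(subnKC size_l) iotaD count_cat add0n.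
rewrite (@eq_in_count _ _ pred0 (iota (size l) _)) ?count_pred0 ?addn0; last first.
  by move=> i; rewrite mem_iota => /andP [li _]; rewrite nth_default.
by rewrite -count_map -[in RHS](mkseq_nth 0%N l).
Qed.

Lemma spin_exp (R : realType) (b : bool) (a : nat) :
  spin R b ^+ a = if odd a then spin R b else 1.
Proof.
case: b; rewrite /spin ?expr1n; first by case: ifP.
by rewrite -signr_odd; case: ifP => _; rewrite ?expr1 ?expr0.
Qed.

(* Since x_i^2 = 1, a monomial moment is the moment of its odd-exponent set. *)
Lemma monomial_slice_moment (R : realType) (n : nat) (s : R) (l : seq nat) :
  slice_expect s (@monomial R n l) = slice_moment s [set i : 'I_n | odd (nth 0%N l i)].
Proof.
rewrite /slice_expect /slice_moment; congr (_ / _); apply: eq_bigr => x _.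
rewrite /monomial [RHS]big_mkcond /=; apply: eq_bigr => i _.
by rewrite spin_exp inE.
Qed.

Lemma square_slice_moment_bound (R : realType) (m j : nat) :
  ((m ^ 2) ^_ j)%:R * (m%:R : R) ^+ j * `|slice_moment_seq (m ^ 2) (m%:R : R) j|
  <= (involutions j)%:R * (m ^ 2)%:R ^+ j.
Proof.
apply: three_term_recurrence_bound; first exact: ler0n.
- by rewrite natrX.
- exact: slice_moment_seq0.
- by move=> i im; apply: slice_moment_rec.
Qed.

Lemma monomial_moment_bound (R : realType) (m k : nat) (l : seq nat) :
  (0 < m)%N -> (2 * size l <= k + count odd l)%N -> (size l <= m ^ 2)%N ->
  ((m ^ 2) ^_ (size l))%:R * `|slice_expect (m%:R : R) (@monomial R (m ^ 2) l)|
  <= (involutions (count odd l))%:R * (m%:R : R) ^+ k.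
Proof.
move=> m_gt0 size_k size_n.
rewrite monomial_slice_moment slice_momentE card_odd_exponents //.
set n := (m ^ 2)%N; set r := size l; set j := count odd l; set M : R := m%:R.
set E := `|slice_moment_seq n M j|.
have jr : (j <= r)%N by apply: count_size.
have M_gt0 : 0 < M by rewrite ltr0n.
have nM : n%:R = M ^+ 2 by rewrite natrX.
rewrite -(ler_pM2r (exprn_gt0 j M_gt0)).
apply: (le_trans (y := (n ^ (r - j))%:R * ((n ^_ j)%:R * M ^+ j * E))).
  have -> : (n ^ (r - j))%:R * ((n ^_ j)%:R * M ^+ j * E) =
            (n ^_ j * n ^ (r - j))%:R * E * M ^+ j by rewrite natrM; ring.
  apply: ler_wpM2r; first exact/exprn_ge0/ltW.
  apply: ler_wpM2r; first exact: normr_ge0.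
  by rewrite ler_nat -{1}(subnKC jr) ffact_le_mul_pow.
apply: (le_trans (ler_wpM2l (ler0n _ _) (square_slice_moment_bound R m j))).
rewrite natrX nM -!exprM mulrCA -exprD -mulrA -exprD ler_wpM2l //.
by rewrite ler_weXn2l ?ler1n //; lia.
Qed.

Lemma partition_term_bound (R : realType) (k m : nat) (l : seq nat) :
  (0 < k)%N -> (0 < m)%N -> l \in partitions k ->
  multinom R k l * (((m ^ 2) ^_ (size l))%:R / (aut_card k l)%:R)
    * `|slice_expect (Num.sqrt ((m ^ 2)%:R)) (@monomial R (m ^ 2) l)|
  <= (k ^ (k - count_mem 1%N l + count odd l))%:R * (m%:R : R) ^+ k.
Proof.
move=> k_gt0 m_gt0 /partitions_parts [l_pos sum_l].
have [size_k _ _ _] := positive_parts_counts l_pos; rewrite sum_l in size_k.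
have [size_n|size_n] := leqP (size l) (m ^ 2); last first.
  by rewrite ffact_small // mul0r mulr0 mul0r mulr_ge0 ?exprn_ge0.
have -> : Num.sqrt ((m ^ 2)%:R : R) = m%:R by rewrite natrX sqrtr_sqr normr_nat.
set E := slice_expect _ _; set P := (\prod_(a <- l) a`!)%N; set A := aut_card k l.
have PA_gt0 : (0 : R) < (P * A)%:R.
  rewrite ltr0n muln_gt0 (leq_trans (fact_gt0 _) (aut_card_ge l k_gt0)) andbT.
  by rewrite prodn_gt0 // => a; apply: fact_gt0.
have -> : multinom R k l * (((m ^ 2) ^_ (size l))%:R / A%:R) * `|E| =
          (k`!)%:R / (P * A)%:R * (((m ^ 2) ^_ (size l))%:R * `|E|).
  by rewrite /multinom natrM invfM; ring.
apply: (le_trans (ler_wpM2l _ (monomial_moment_bound R m_gt0 size_k size_n))).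
  by rewrite divr_ge0 // ltW.
rewrite mulrA ler_wpM2r ?exprn_ge0 // mulrAC ler_pdivrMr // -!natrM ler_nat.
exact: partition_weight_nat.
Qed.

Lemma lhsB6_le (R : realType) (k m : nat) : (0 < k)%N -> (0 < m)%N ->
  lhsB6 R k (m ^ 2) <= (k ^ (2 * k))%:R * (m%:R : R) ^+ k.
Proof.
move=> k_gt0 m_gt0.
have pow2_gt0 : (0 : R) < (2 ^ k.-1)%:R by rewrite ltr0n expn_gt0.
set c : R := (k ^ (2 * k))%:R / (2 ^ k.-1)%:R * (m%:R : R) ^+ k.
apply: (le_trans (y := \sum_(l <- partitions k) c)).
  rewrite /lhsB6 big_seq [X in _ <= X]big_seq; apply: ler_sum => l l_part.
  apply: (le_trans (partition_term_bound R k_gt0 m_gt0 l_part)).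
  rewrite ler_wpM2r ?exprn_ge0 // ler_pdivlMr // -natrM ler_nat mulnC.
  have [l_pos sum_l] := partitions_parts l_part.
  have [_ counts ones_odd _] := positive_parts_counts l_pos.
  by rewrite partition_weight_le // -sum_l.
rewrite big_const_seq count_predT iter_addr_0 -[c *+ _]mulr_natr.
have c_ge0 : 0 <= c by rewrite /c mulr_ge0 ?divr_ge0 ?exprn_ge0.
apply: (le_trans (y := c * (2 ^ k.-1)%:R)).
  by rewrite ler_wpM2l // ler_nat size_partitions.
by rewrite /c mulrAC divfK // gt_eqF.
Qed.

Lemma rhsB6_eq (R : realType) (k m : nat) :
  powR (k%:R : R) (2 * k%:R) * powR ((m ^ 2)%:R) (k%:R / 2)
  = (k ^ (2 * k))%:R * (m%:R : R) ^+ k.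
Proof.
rewrite -natrM !natrX powR_mulrn ?ler0n //; congr (_ * _).
rewrite -[(m%:R : R) ^+ 2]powR_mulrn ?ler0n // -powRrM.
by rewrite mulrCA divff ?mulr1 ?pnatr_eq0 // powR_mulrn ?ler0n.
Qed.

Theorem lemmaB6 (R : realType) :
  exists C : R, 1 <= C /\
    (forall (k m : nat), (1 <= k)%N -> (1 <= m)%N ->
       lhsB6 R k (m ^ 2) <= powR (k%:R) (C * k%:R) * powR ((m ^ 2)%:R) (k%:R / 2)) /\
    (forall (k m : nat), (1 <= k)%N -> (1 <= m)%N -> (6 <= m ^ 2)%N ->
       lhsB6 R k (m ^ 2) <= powR (k%:R) (2 * k%:R) * powR ((m ^ 2)%:R) (k%:R / 2)).
Proof.
exists 2; split; first by rewrite ler1n.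
by split=> k m k_gt0 m_gt0 => [|_]; rewrite rhsB6_eq lhsB6_le.
Qed.
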